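(* Let $u,v$ be sufficiently large positive real numbers such that $v^{9/10}\le u\le2v$. Let $t>1$ be a real number that is not an integer expressible as a sum of two squares, such that $|u-t|\le v^{1/3}$. Then \[ \sum_{m:\,|m-u|>v^{1/2}}r(m)\Big(\frac1{m-t}-\frac{m}{m^2+1}\Big)=-\pi\log t+O(1). \]
   Context: $r(m)=\#\{(a,b)\in\mathbb Z^2:a^2+b^2=m\}$; the sum is over integers $m\ge1$. *)

From Stdlib Require Import Reals ZArith List.
From Coquelicot Require Import Coquelicot.
Open Scope R_scope.

Definition zrange (N : nat) : list Z :=
  map (fun k => (Z.of_nat k - Z.of_nat N)%Z) (seq 0 (2 * N + 1)).

(* r(m) = #{(a,b) in Z^2 : a^2 + b^2 = m}.  Any solution has |a|,|b| <= m,
   so it suffices to enumerate pairs in [-m,m]^2. *)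
Definition r2 (m : nat) : nat :=
  length (filter (fun p : Z * Z => Z.eqb (fst p * fst p + snd p * snd p) (Z.of_nat m))
                 (list_prod (zrange m) (zrange m))).

Definition term (u v t : R) (m : nat) : R :=
  if Nat.ltb 0 m then
    if Rlt_dec (sqrt v) (Rabs (INR m - u)) then
      INR (r2 m) * (1 / (INR m - t) - INR m / (INR m ^ 2 + 1))
    else 0
  else 0.

From Stdlib Require Import Reals ZArith List Lia Lra.
From Coquelicot Require Import Coquelicot.
Open Scope R_scope.

(* Write [f_t(m) = 1/(m - t) - m/(m^2 + 1)] and [R(N) = sum_(1 <= m <= N) r(m)].
   Counting the lattice points of a disc column by column and comparing with the
   area integral of [sqrt (1 - y^2)] gives Gauss's bound [|R(N) - pi N| <= 8 sqrt N].
   Abel summation then replaces [r(m)] by [pi] on each of the two ranges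
   [1 <= m <= L < u - sqrt v] and [u + sqrt v < H <= m <= N], at a cost controlled by
   [sqrt m |f_t(m)|] and [sum sqrt m |f_t(m+1) - f_t(m)|]; these are [O(1)] because
   [|m - t| >= 3/4 sqrt v] while [m = O(v)] on both ranges.  The sums of [f_t] are
   logarithms up to [O(1)]: together they give
   [ln((t - L)/(H - t)) + ln((N + 1 - t)/(N + 1)) + ln(H/(L + 1)) - ln t], and each of the
   three ratios is bounded.  The terms are positive for [m > t], so the bounded partial
   sums converge. *)

(** * Lattice points in a disc *)

Fixpoint nsum (G : nat -> nat) (n : nat) : nat :=
  match n with O => O | S k => (nsum G k + G k)%nat end.

Lemma nsum_ext F G n : (forall k, (k < n)%nat -> F k = G k) -> nsum F n = nsum G n.
Proof. induction n; intros H; simpl; auto; rewrite IHn, H; auto. Qed.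

Lemma nsum_add F G n : nsum (fun k => F k + G k)%nat n = (nsum F n + nsum G n)%nat.
Proof. induction n; simpl; lia. Qed.

Lemma nsum_shift F n : nsum F (S n) = (F O + nsum (fun k => F (S k)) n)%nat.
Proof. induction n; simpl in *; lia. Qed.

Definition zsum (N : nat) (F : Z -> nat) : nat := list_sum (map F (zrange N)).

Lemma zrange_S N :
  zrange (S N) = (- Z.of_nat (S N) :: zrange N ++ Z.of_nat (S N) :: nil)%Z%list.
Proof.
  unfold zrange.
  replace (2 * S N + 1)%nat with (S (S (2 * N + 1))) by lia.
  rewrite seq_S; cbn [seq]; rewrite <- seq_shift, map_app; cbn [map app]; rewrite map_map.
  f_equal; f_equal; [apply map_ext; intros; lia | f_equal; lia].
Qed.

Lemma zsum_0 F : zsum 0 F = F 0%Z.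
Proof. unfold zsum; simpl; lia. Qed.

Lemma zsum_S N F :
  zsum (S N) F = (F (- Z.of_nat (S N))%Z + zsum N F + F (Z.of_nat (S N)))%nat.
Proof. unfold zsum; rewrite zrange_S; simpl; rewrite map_app, list_sum_app; simpl; lia. Qed.

Lemma zsum_ext N F G : (forall z, F z = G z) -> zsum N F = zsum N G.
Proof. intros H; unfold zsum; f_equal; apply map_ext, H. Qed.

Lemma zsum_add N F G : zsum N (fun z => F z + G z)%nat = (zsum N F + zsum N G)%nat.
Proof. induction N; [rewrite !zsum_0 | rewrite !zsum_S]; lia. Qed.

Lemma zsum_zero N : zsum N (fun _ => O) = O.
Proof. induction N; [rewrite zsum_0 | rewrite zsum_S]; lia. Qed.

Lemma zsum_widen M N F : (M <= N)%nat ->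
  (forall z, (Z.of_nat M < Z.abs z)%Z -> F z = O) -> zsum N F = zsum M F.
Proof.
  intros HMN HF; induction HMN as [|N HMN IH]; [reflexivity|].
  rewrite zsum_S, IH, !HF; lia.
Qed.

Lemma zsum_even N F : (forall z, F (- z)%Z = F z) ->
  zsum N F = (F 0%Z + 2 * nsum (fun k => F (Z.of_nat (S k))) N)%nat.
Proof.
  intros HF; induction N; [rewrite zsum_0; simpl; lia|].
  rewrite zsum_S, HF, IHN; cbn [nsum]; lia.
Qed.

Lemma nsum_zsum_comm N K (F : nat -> Z -> nat) :
  nsum (fun m => zsum N (F m)) K = zsum N (fun z => nsum (fun m => F m z) K).
Proof.
  induction K; simpl; [symmetry; apply zsum_zero|].
  rewrite IHK, <- zsum_add; reflexivity.
Qed.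

Lemma nsum_indicator_eq (x : Z) K : (0 <= x)%Z ->
  nsum (fun m => if Z.eqb x (Z.of_nat m) then 1%nat else 0%nat) K =
  if Z.ltb x (Z.of_nat K) then 1%nat else 0%nat.
Proof.
  intros Hx; induction K; cbn [nsum]; [destruct (Z.ltb_spec x (Z.of_nat 0)); lia|].
  rewrite IHK.
  destruct (Z.ltb_spec x (Z.of_nat K)), (Z.eqb_spec x (Z.of_nat K)),
    (Z.ltb_spec x (Z.of_nat (S K))); lia.
Qed.

Lemma nsum_indicator_square_le c N :
  nsum (fun k => if Z.leb (Z.of_nat (S k) * Z.of_nat (S k)) c then 1%nat else 0%nat) N
  = if Z.ltb c 0 then 0%nat else Nat.min N (Nat.sqrt (Z.to_nat c)).
Proof.
  induction N; cbn [nsum]; [destruct (Z.ltb_spec c 0); lia|].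
  rewrite IHN.
  destruct (Z.leb_spec (Z.of_nat (S N) * Z.of_nat (S N)) c) as [H|H];
    destruct (Z.ltb_spec c 0); try lia.
  - enough (S N <= Nat.sqrt (Z.to_nat c))%nat by lia.
    apply Nat.sqrt_le_square; lia.
  - enough (~ (S N <= Nat.sqrt (Z.to_nat c)))%nat by lia.
    rewrite <- Nat.sqrt_le_square; lia.
Qed.

Definition count_box (N : nat) (P : Z -> Z -> bool) : nat :=
  zsum N (fun a => zsum N (fun b => if P a b then 1%nat else 0%nat)).

Lemma length_filter_prod {A B} (p : A * B -> bool) l1 l2 :
  length (filter p (list_prod l1 l2)) =
  list_sum (map (fun a => list_sum (map (fun b => if p (a, b) then 1%nat else 0%nat) l2)) l1).
Proof.
  induction l1 as [|a l1 IH]; simpl; auto.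
  rewrite filter_app, length_app, IH; f_equal.
  clear; induction l2 as [|b l2 IH]; simpl; auto; destruct (p (a, b)); simpl; lia.
Qed.

Lemma r2_count_box m N : (m <= N)%nat ->
  r2 m = count_box N (fun a b => Z.eqb (a * a + b * b) (Z.of_nat m)).
Proof.
  intros HmN.
  transitivity (count_box m (fun a b => Z.eqb (a * a + b * b) (Z.of_nat m))).
  { unfold r2; rewrite length_filter_prod; reflexivity. }
  unfold count_box; symmetry; rewrite (zsum_widen m N); [| exact HmN |].
  - apply zsum_ext; intros a; apply zsum_widen; auto.
    intros b Hb; destruct (Z.eqb_spec (a * a + b * b) (Z.of_nat m)); nia.
  - intros a Ha; transitivity (zsum N (fun _ => O)); [apply zsum_ext; intros b | apply zsum_zero].
    destruct (Z.eqb_spec (a * a + b * b) (Z.of_nat m)); nia.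
Qed.

Definition lattice_disk (N : nat) : nat :=
  count_box N (fun a b => Z.leb (a * a + b * b) (Z.of_nat N)).

Lemma nsum_r2_lattice_disk N : nsum r2 (S N) = lattice_disk N.
Proof.
  rewrite (nsum_ext _ (fun m => count_box N (fun a b => Z.eqb (a * a + b * b) (Z.of_nat m))))
    by (intros; apply r2_count_box; lia).
  unfold count_box; rewrite nsum_zsum_comm; apply zsum_ext; intros a.
  rewrite nsum_zsum_comm; apply zsum_ext; intros b.
  rewrite nsum_indicator_eq by nia.
  destruct (Z.ltb_spec (a * a + b * b) (Z.of_nat (S N))),
    (Z.leb_spec (a * a + b * b) (Z.of_nat N)); lia.
Qed.

Lemma zsum_indicator_square_le (c : Z) N : (c <= Z.of_nat N)%Z ->
  zsum N (fun b => if Z.leb (b * b) c then 1%nat else 0%nat) =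
  if Z.ltb c 0 then 0%nat else (2 * Nat.sqrt (Z.to_nat c) + 1)%nat.
Proof.
  intros Hc; rewrite zsum_even by (intros; rewrite Z.mul_opp_opp; auto).
  rewrite nsum_indicator_square_le, Z.mul_0_l.
  destruct (Z.ltb_spec c 0), (Z.leb_spec 0 c); try lia.
  pose proof (Nat.sqrt_le_lin (Z.to_nat c)); lia.
Qed.

(* Truncated subtraction turns the terms with [(k + 1)^2 > N] into [Nat.sqrt 0 = 0]. *)
Definition quarter_disk_floor (N : nat) : nat :=
  nsum (fun k => Nat.sqrt (N - S k * S k)) N.

Lemma lattice_disk_formula N :
  lattice_disk N = (1 + 4 * Nat.sqrt N + 4 * quarter_disk_floor N)%nat.
Proof.
  unfold lattice_disk, count_box.
  rewrite (zsum_ext N _ (fun a => if Z.ltb (Z.of_nat N - a * a) 0 then 0%nat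
        else (2 * Nat.sqrt (Z.to_nat (Z.of_nat N - a * a)) + 1)%nat)).
  2:{ intros a; rewrite <- (zsum_indicator_square_le _ N) by nia; apply zsum_ext; intros b.
      destruct (Z.leb_spec (a * a + b * b) (Z.of_nat N)),
        (Z.leb_spec (b * b) (Z.of_nat N - a * a)); lia. }
  rewrite zsum_even by (intros; rewrite Z.mul_opp_opp; auto).
  rewrite (nsum_ext _ (fun k => Nat.sqrt (N - S k * S k) + Nat.sqrt (N - S k * S k) +
      (if Z.leb (Z.of_nat (S k) * Z.of_nat (S k)) (Z.of_nat N) then 1 else 0))%nat).
  2:{ intros k _.
      destruct (Z.ltb_spec (Z.of_nat N - Z.of_nat (S k) * Z.of_nat (S k)) 0),
        (Z.leb_spec (Z.of_nat (S k) * Z.of_nat (S k)) (Z.of_nat N)); try lia.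
      - replace (N - S k * S k)%nat with 0%nat by nia; reflexivity.
      - replace (Z.to_nat (Z.of_nat N - Z.of_nat (S k) * Z.of_nat (S k)))
          with (N - S k * S k)%nat by nia; lia. }
  rewrite !nsum_add, nsum_indicator_square_le, Z.mul_0_l, Z.sub_0_r, Nat2Z.id.
  unfold quarter_disk_floor; destruct (Z.ltb_spec (Z.of_nat N) 0); try lia.
  pose proof (Nat.sqrt_le_lin N); lia.
Qed.

Lemma sum_r2_formula N :
  nsum (fun k => r2 (S k)) N = (4 * Nat.sqrt N + 4 * quarter_disk_floor N)%nat.
Proof.
  pose proof (nsum_r2_lattice_disk N) as H.
  rewrite nsum_shift, lattice_disk_formula in H; change (r2 0) with 1%nat in H; lia.
Qed.

Fixpoint psum (F : nat -> R) (n : nat) : R :=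
  match n with O => 0 | S k => psum F k + F k end.

(* [rsum F A B] is the sum of [F m] over [A <= m < B] when [A <= B]. *)
Definition rsum (F : nat -> R) (A B : nat) : R := psum F B - psum F A.

Lemma rsum_nil F A : rsum F A A = 0.
Proof. unfold rsum; ring. Qed.

Lemma rsum_S F A B : rsum F A (S B) = rsum F A B + F B.
Proof. unfold rsum; simpl; ring. Qed.

Lemma rsum_split F A B C : rsum F A C = rsum F A B + rsum F B C.
Proof. unfold rsum; ring. Qed.

Lemma rsum_plus F G A B : rsum (fun m => F m + G m) A B = rsum F A B + rsum G A B.
Proof.
  assert (H : forall n, psum (fun m => F m + G m) n = psum F n + psum G n)
    by (induction n; simpl; lra).
  unfold rsum; rewrite !H; ring.
Qed.

Lemma rsum_minus F G A B : rsum (fun m => F m - G m) A B = rsum F A B - rsum G A B.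
Proof.
  assert (H : forall n, psum (fun m => F m - G m) n = psum F n - psum G n)
    by (induction n; simpl; lra).
  unfold rsum; rewrite !H; ring.
Qed.

Lemma rsum_scal c F A B : rsum (fun m => c * F m) A B = c * rsum F A B.
Proof.
  assert (H : forall n, psum (fun m => c * F m) n = c * psum F n)
    by (induction n; simpl; [|rewrite IHn]; ring).
  unfold rsum; rewrite !H; ring.
Qed.

Lemma rsum_telescope G A B : rsum (fun m => G (S m) - G m) A B = G B - G A.
Proof.
  assert (H : forall n, psum (fun m => G (S m) - G m) n = G n - G O)
    by (induction n; simpl; [|rewrite IHn]; ring).
  unfold rsum; rewrite !H; ring.
Qed.

Lemma rsum_telescope_neg G A B : rsum (fun m => G m - G (S m)) A B = G A - G B.
Proof. pose proof (rsum_telescope G A B); rewrite rsum_minus in *; lra. Qed.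

Lemma rsum_const0 A B : rsum (fun _ => 0) A B = 0.
Proof.
  assert (H : forall n, psum (fun _ => 0) n = 0) by (induction n; simpl; lra).
  unfold rsum; rewrite !H; ring.
Qed.

Section RangeInduction.

Variables (A : nat) (F G : nat -> R).

Lemma rsum_ext B : (A <= B)%nat ->
  (forall m, (A <= m < B)%nat -> F m = G m) -> rsum F A B = rsum G A B.
Proof.
  induction 1 as [|B HAB IH]; intros H; rewrite ?rsum_nil, ?rsum_S; auto.
  rewrite IH by (intros m Hm; apply H; lia).
  rewrite H by lia; reflexivity.
Qed.

Lemma rsum_le B : (A <= B)%nat ->
  (forall m, (A <= m < B)%nat -> F m <= G m) -> rsum F A B <= rsum G A B.
Proof.
  induction 1 as [|B HAB IH]; intros H; rewrite ?rsum_nil, ?rsum_S; [lra|].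
  specialize (IH (fun m Hm => H m ltac:(lia))); specialize (H B ltac:(lia)); lra.
Qed.

Lemma rsum_abs B : (A <= B)%nat -> Rabs (rsum F A B) <= rsum (fun m => Rabs (F m)) A B.
Proof.
  induction 1 as [|B HAB IH]; rewrite ?rsum_nil, ?rsum_S; [rewrite Rabs_R0; lra|].
  eapply Rle_trans; [apply Rabs_triang | lra].
Qed.

End RangeInduction.

Lemma rsum_zero F A B : (A <= B)%nat ->
  (forall m, (A <= m < B)%nat -> F m = 0) -> rsum F A B = 0.
Proof. intros HAB H; rewrite (rsum_ext A F (fun _ => 0)) by auto; apply rsum_const0. Qed.

Lemma INR_nsum G n : INR (nsum G n) = rsum (fun k => INR (G k)) 0 n.
Proof.
  induction n; cbn [nsum]; [rewrite rsum_nil; reflexivity|].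
  rewrite rsum_S, plus_INR, IHn; reflexivity.
Qed.

Lemma rsum_one A B : (A <= B)%nat -> rsum (fun _ => 1) A B = INR B - INR A.
Proof.
  intros HAB; rewrite <- (rsum_telescope INR).
  apply rsum_ext; auto; intros m _; rewrite S_INR; ring.
Qed.

Lemma sum_n_rsum a n : sum_n a n = rsum a 0 (S n).
Proof.
  induction n; [rewrite sum_O | rewrite sum_Sn, IHn]; unfold rsum, plus; simpl; lra.
Qed.

Lemma rsum_telescope_approx F K J A B : (A <= B)%nat ->
  (forall m, (A <= m < B)%nat -> Rabs (F m - (K (S m) - K m)) <= J m - J (S m)) ->
  Rabs (rsum F A B - (K B - K A)) <= J A - J B.
Proof.
  intros HAB HF.
  rewrite <- (rsum_telescope_neg J), <- (rsum_telescope K), <- rsum_minus.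
  eapply Rle_trans; [apply rsum_abs, HAB | apply rsum_le; auto].
Qed.

Lemma Rdiv_le_div_cross p q r s : 0 < q -> 0 < s -> p * s <= r * q -> p / q <= r / s.
Proof.
  intros Hq Hs H; apply (Rmult_le_reg_r (q * s)); [nra|].
  replace (p / q * (q * s)) with (p * s) by (field; lra).
  replace (r / s * (q * s)) with (r * q) by (field; lra); exact H.
Qed.

Lemma Rdiv_le_of_le_mult a b c : 0 < b -> a <= c * b -> a / b <= c.
Proof.
  intros Hb H; rewrite <- (Rdiv_1_r c).
  apply Rdiv_le_div_cross; lra.
Qed.

Lemma ln_le_sub_1 x : 0 < x -> ln x <= x - 1.
Proof.
  intros Hx; pose proof (exp_ineq1_le (ln x)) as Hexp.
  rewrite exp_ln in Hexp by exact Hx; lra.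
Qed.

Lemma ln_succ_bounds z : 0 < z -> 1 / (z + 1) <= ln (z + 1) - ln z <= 1 / z.
Proof.
  intros Hz; split.
  - pose proof (ln_le_sub_1 (z / (z + 1)) ltac:(apply Rdiv_lt_0_compat; lra)) as Hln.
    rewrite ln_div in Hln by lra.
    replace (z / (z + 1) - 1) with (- (1 / (z + 1))) in Hln by (field; lra); lra.
  - rewrite <- ln_div by lra.
    pose proof (ln_le_sub_1 ((z + 1) / z) ltac:(apply Rdiv_lt_0_compat; lra)) as Hln.
    replace ((z + 1) / z - 1) with (1 / z) in Hln by (field; lra); exact Hln.
Qed.

Lemma ln_ratio_le_3 p q : 0 < p -> 0 < q -> p <= 4 * q -> q <= 4 * p -> Rabs (ln p - ln q) <= 3.
Proof.
  intros Hp Hq Hpq Hqp.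
  pose proof (ln_le_sub_1 (p / q) ltac:(apply Rdiv_lt_0_compat; lra)).
  pose proof (ln_le_sub_1 (q / p) ltac:(apply Rdiv_lt_0_compat; lra)).
  rewrite ln_div in * by lra.
  pose proof (Rdiv_le_of_le_mult p q 4 Hq ltac:(lra)).
  pose proof (Rdiv_le_of_le_mult q p 4 Hp ltac:(lra)).
  apply Rabs_le; lra.
Qed.

Lemma Rpower_gap K v a b : 0 < v -> K <= 1 + (b - a) * ln v -> K * Rpower v a <= Rpower v b.
Proof.
  intros Hv HK.
  replace (Rpower v b) with (exp ((b - a) * ln v) * Rpower v a)
    by (unfold Rpower; rewrite <- exp_plus; f_equal; ring).
  pose proof (exp_ineq1_le ((b - a) * ln v)); pose proof (exp_pos (a * ln v)).
  unfold Rpower; nra.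
Qed.

(** * Gauss's circle bound *)

Lemma continuity_pt_asin_1 : continuity_pt asin 1.
Proof.
  unfold continuity_pt, continue_in, limit1_in, limit_in; simpl; unfold R_dist.
  intros eps Heps; pose proof PI_RGT_0.
  set (e := Rmin (eps / 2) (PI / 4)).
  assert (He : 0 < e <= eps / 2 /\ e <= PI / 4)
    by (unfold e; repeat split; [apply Rmin_glb_lt; lra | apply Rmin_l | apply Rmin_r]).
  assert (Hcos : 0 <= cos e < 1)
    by (split; [apply cos_ge_0 | rewrite <- cos_0; apply cos_decreasing_1]; lra).
  exists (1 - cos e); split; [lra|]; intros y [_ Hy]; rewrite asin_1.
  destruct (Rle_dec 1 y) as [H1|H1].
  - (* Stdlib's [asin] is [PI / 2] on [[1, +oo)]. *)
    unfold asin; destruct (Rle_dec y (-1)), (Rle_dec 1 y); try lra.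
    rewrite Rminus_diag, Rabs_R0; lra.
  - apply Rabs_def2 in Hy; pose proof (asin_bound y).
    assert (PI / 2 - e < asin y).
    { destruct (Rlt_le_dec (PI / 2 - e) (asin y)) as [h|h]; auto; exfalso.
      assert (Hsin : sin (asin y) <= sin (PI / 2 - e)).
      { destruct (Rle_lt_or_eq_dec _ _ h) as [h' | h'];
          [left; apply sin_increasing_1 | rewrite h']; lra. }
      rewrite sin_asin, sin_shift in Hsin by lra; lra. }
    rewrite Rabs_left1; lra.
Qed.

Definition circ_primitive (y : R) : R := / 2 * (y * sqrt (1 - y * y) + asin y).

Lemma circ_primitive_0 : circ_primitive 0 = 0.
Proof. unfold circ_primitive; rewrite asin_0; ring. Qed.

Lemma circ_primitive_1 : circ_primitive 1 = PI / 4.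
Proof.
  unfold circ_primitive; rewrite asin_1; replace (1 - 1 * 1) with 0 by ring.
  rewrite sqrt_0; field.
Qed.

Lemma is_derive_circ_primitive y : -1 < y < 1 ->
  is_derive circ_primitive y (sqrt (1 - y * y)).
Proof.
  intros Hy.
  assert (Hs : 0 < sqrt (1 - y * y)) by (apply sqrt_lt_R0; nra).
  assert (Hss : sqrt (1 - y * y) * sqrt (1 - y * y) = 1 - y * y) by (apply sqrt_sqrt; nra).
  assert (Dasin : is_derive asin y (1 / sqrt (1 - y * y))).
  { apply is_derive_Reals, derive_pt_eq_1 with (pr := derivable_pt_asin y Hy).
    rewrite derive_pt_asin; reflexivity. }
  assert (Dprod : is_derive (fun x => x * sqrt (1 - x * x)) y
                   (sqrt (1 - y * y) - y * y / sqrt (1 - y * y))).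
  { auto_derive; [nra|]; replace (1 + - (y * y)) with (1 - y * y) by ring; field; lra. }
  replace (sqrt (1 - y * y))
    with (/ 2 * ((sqrt (1 - y * y) - y * y / sqrt (1 - y * y)) + 1 / sqrt (1 - y * y))).
  - exact (is_derive_scal _ _ _ _ (is_derive_plus _ _ _ _ _ Dprod Dasin)).
  - field_simplify; [|lra].
    rewrite pow2_sqrt by nra.
    replace (1 - y * y - y ^ 2 + 1) with (2 * (sqrt (1 - y * y) * sqrt (1 - y * y)))
      by (rewrite Hss; ring).
    field; lra.
Qed.

Lemma continuity_pt_circ_primitive y : 0 <= y <= 1 -> continuity_pt circ_primitive y.
Proof.
  intros Hy; destruct (Req_dec y 1) as [->|Hne].
  - apply continuity_pt_filterlim; unfold circ_primitive.
    apply (continuous_mult (fun _ => / 2) (fun x => x * sqrt (1 - x * x) + asin x));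
      [apply continuous_const|].
    apply (continuous_plus (fun x => x * sqrt (1 - x * x)) asin).
    + apply (continuous_mult (fun x => x) (fun x => sqrt (1 - x * x))); [apply continuous_id|].
      apply (continuous_comp (fun x => 1 - x * x) sqrt); apply continuity_pt_filterlim;
        [reg | apply continuity_pt_sqrt; lra].
    + apply continuity_pt_filterlim, continuity_pt_asin_1.
  - apply derivable_continuous_pt; exists (sqrt (1 - y * y)).
    apply is_derive_Reals, is_derive_circ_primitive; lra.
Qed.

Lemma circ_primitive_increment x a b : 0 < x -> 0 <= a <= b -> b <= x ->
  (b - a) * sqrt (x * x - b * b) <= x * x * (circ_primitive (b / x) - circ_primitive (a / x))
  <= (b - a) * sqrt (x * x - a * a).
Proof.
  intros Hx Hab Hbx.
  assert (Hdiv : forall z, z / x * x = z) by (intros; field; lra).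
  assert (Ha : 0 <= a / x) by (apply Rdiv_le_0_compat; lra).
  assert (Hb : b / x <= 1) by (apply (Rdiv_le_1 b x Hx); lra).
  assert (Hab' : a / x <= b / x)
    by (apply Rmult_le_compat_r; [left; apply Rinv_0_lt_compat|]; lra).
  destruct (MVT_gen circ_primitive (a / x) (b / x) (fun y => sqrt (1 - y * y)))
    as [c [Hc Hmvt]]; rewrite ?Rmin_left, ?Rmax_right in * by exact Hab'.
  - intros y Hy; apply is_derive_circ_primitive; lra.
  - intros y Hy; apply continuity_pt_circ_primitive; lra.
  - assert (Hxc : a <= x * c <= b).
    { destruct Hc as [Hc1 Hc2].
      apply (Rmult_le_compat_l x) in Hc1, Hc2; try lra.
      rewrite Rmult_comm, (Rmult_comm x (b / x)), !Hdiv in *; lra. }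
    assert (Hval : x * x * (circ_primitive (b / x) - circ_primitive (a / x))
                   = (b - a) * sqrt (x * x - (x * c) * (x * c))).
    { rewrite Hmvt.
      replace (x * x - x * c * (x * c)) with ((x * x) * (1 - c * c)) by ring.
      rewrite sqrt_mult_alt, sqrt_square by nra; field; lra. }
    rewrite Hval; split; apply Rmult_le_compat_l; try lra; apply sqrt_le_1_alt; nra.
Qed.

Lemma sum_sqrt_circle x s : 0 < x -> INR s <= x ->
  rsum (fun k => sqrt (x * x - INR (S k) * INR (S k))) 0 s
  <= x * x * circ_primitive (INR s / x)
  <= rsum (fun k => sqrt (x * x - INR (S k) * INR (S k))) 0 s + x.
Proof.
  intros Hx Hs.
  set (g := fun k : nat => sqrt (x * x - INR k * INR k)).
  set (P := fun k : nat => x * x * circ_primitive (INR k / x)).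
  change (rsum (fun k => g (S k)) 0 s <= P s <= rsum (fun k => g (S k)) 0 s + x).
  assert (HP : P s = rsum (fun k => P (S k) - P k) 0 s).
  { rewrite rsum_telescope; unfold P; simpl INR.
    rewrite Rdiv_0_l, circ_primitive_0; ring. }
  assert (Hstep : forall k, (0 <= k < s)%nat -> g (S k) <= P (S k) - P k <= g k).
  { intros k Hk; unfold g, P; rewrite <- Rmult_minus_distr_l.
    assert (INR (S k) <= INR s) by (apply le_INR; lia).
    pose proof (pos_INR k).
    rewrite S_INR in *.
    pose proof (circ_primitive_increment x (INR k) (INR k + 1) Hx ltac:(lra) ltac:(lra)).
    replace (INR k + 1 - INR k) with 1 in * by ring; lra. }
  assert (Hg : rsum g 0 s = rsum (fun k => g (S k)) 0 s + g O - g s).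
  { pose proof (rsum_telescope g 0 s) as Htele; rewrite rsum_minus in Htele; lra. }
  assert (g O = x) by (unfold g; simpl INR; rewrite Rmult_0_l, Rminus_0_r; apply sqrt_square; lra).
  assert (0 <= g s) by apply sqrt_pos.
  assert (rsum (fun k => g (S k)) 0 s <= P s <= rsum g 0 s)
    by (rewrite HP; split; apply rsum_le; try lia; apply Hstep).
  lra.
Qed.

Lemma sqrt_nat_bounds c : INR (Nat.sqrt c) <= sqrt (INR c) < INR (Nat.sqrt c) + 1.
Proof.
  destruct (Nat.sqrt_spec c ltac:(lia)) as [H1 H2].
  apply le_INR in H1; apply lt_INR in H2; rewrite !mult_INR, S_INR in *.
  pose proof (pos_INR (Nat.sqrt c)); split.
  - rewrite <- (sqrt_square (INR (Nat.sqrt c))) by lra; apply sqrt_le_1_alt; lra.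
  - rewrite <- (sqrt_square (INR (Nat.sqrt c) + 1)) by lra.
    apply sqrt_lt_1_alt; split; [apply pos_INR | lra].
Qed.

(* [sqrt] is [0] on negative reals, so only the terms with [(k + 1)^2 <= N] count. *)
Definition quarter_disk_sqrt (N : nat) : R :=
  rsum (fun k => sqrt (INR N - INR (S k) * INR (S k))) 0 N.

Lemma quarter_disk_sqrt_area N :
  -2 * sqrt (INR N) <= quarter_disk_sqrt N - INR N * PI / 4 <= 0.
Proof.
  destruct N as [|N']; [unfold quarter_disk_sqrt; rewrite rsum_nil; simpl; rewrite sqrt_0; lra|].
  set (N := S N'); set (x := sqrt (INR N)); set (s := Nat.sqrt N).
  assert (HN : 0 < INR N) by apply lt_0_INR, Nat.lt_0_succ.
  assert (Hx : 0 < x) by (apply sqrt_lt_R0; auto).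
  assert (Hxx : x * x = INR N) by (apply sqrt_sqrt; lra).
  pose proof (sqrt_nat_bounds N) as Hs; fold s x in Hs.
  assert (Htail : quarter_disk_sqrt N = rsum (fun k => sqrt (x * x - INR (S k) * INR (S k))) 0 s).
  { unfold quarter_disk_sqrt; rewrite Hxx, (rsum_split _ 0 s N), (rsum_zero _ s N).
    - ring.
    - apply Nat.sqrt_le_lin.
    - intros k Hk; apply sqrt_neg_0.
      assert (INR s + 1 <= INR (S k)) by (rewrite <- S_INR; apply le_INR; lia).
      pose proof (pos_INR s); nra. }
  pose proof (sum_sqrt_circle x s Hx ltac:(lra)) as Hsum.
  pose proof (circ_primitive_increment x (INR s) x Hx ltac:(pose proof (pos_INR s); lra)
    ltac:(lra)) as Hend.
  replace (x / x) with 1 in Hend by (field; lra); rewrite circ_primitive_1 in Hend.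
  assert (Hroot : sqrt (x * x - INR s * INR s) <= x).
  { apply Rle_trans with (sqrt (x * x)); [apply sqrt_le_1_alt | rewrite sqrt_square];
      pose proof (pos_INR s); nra. }
  assert (0 <= sqrt (x * x - x * x)) by apply sqrt_pos.
  rewrite Htail, <- Hxx; split; nra.
Qed.

Lemma quarter_disk_sqrt_floor N :
  0 <= quarter_disk_sqrt N - INR (quarter_disk_floor N) <= INR (Nat.sqrt N).
Proof.
  set (s := Nat.sqrt N).
  set (d := fun k => sqrt (INR N - INR (S k) * INR (S k)) - INR (Nat.sqrt (N - S k * S k))).
  assert (Hd : forall k, 0 <= d k <= 1 /\ ((s <= k)%nat -> d k = 0)).
  { intros k; unfold d; rewrite <- mult_INR.
    destruct (le_lt_dec (S k * S k) N) as [Hk|Hk].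
    - rewrite <- minus_INR by exact Hk.
      pose proof (sqrt_nat_bounds (N - S k * S k)); split; [lra|].
      intros Hsk; exfalso.
      destruct (Nat.sqrt_spec N ltac:(lia)) as [_ HN]; fold s in HN; nia.
    - replace (N - S k * S k)%nat with 0%nat by lia.
      rewrite sqrt_neg_0 by (apply lt_INR in Hk; lra); simpl; lra. }
  assert (Hsplit : quarter_disk_sqrt N - INR (quarter_disk_floor N) = rsum d 0 s).
  { unfold quarter_disk_sqrt, quarter_disk_floor; rewrite INR_nsum, <- rsum_minus.
    rewrite (rsum_split _ 0 s N), (rsum_zero _ s N), Rplus_0_r; [reflexivity | |].
    - apply Nat.sqrt_le_lin.
    - intros k Hk; apply Hd; lia. }
  rewrite Hsplit; split.
  - rewrite <- (rsum_const0 0 s); apply rsum_le; [lia | intros; apply Hd].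
  - replace (INR s) with (rsum (fun _ => 1) 0 s) by (rewrite rsum_one by lia; simpl; ring).
    apply rsum_le; [lia | intros; apply Hd].
Qed.

Definition lattice_error (n : nat) : R := INR (nsum (fun k => r2 (S k)) n) - PI * INR n.

Lemma gauss_circle_bound n : Rabs (lattice_error n) <= 8 * sqrt (INR n).
Proof.
  unfold lattice_error; rewrite sum_r2_formula, plus_INR, !mult_INR.
  pose proof (quarter_disk_sqrt_floor n); pose proof (quarter_disk_sqrt_area n).
  pose proof (sqrt_nat_bounds n).
  replace (INR 4) with 4 by (simpl; lra); apply Rabs_le; split; nra.
Qed.

(** * Abel summation *)

Definition abel_weight (f : nat -> R) (a B : nat) : R :=
  sqrt (INR B) * Rabs (f B) + sqrt (INR a) * Rabs (f (S a)) +
  rsum (fun m => sqrt (INR m) * Rabs (f (S m) - f m)) (S a) B.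

Section AbelSummation.

Variables (c e : nat -> R).
Hypothesis e_step : forall m, e (S m) - e m = c (S m).

Lemma abel_summation f a B : (S a <= B)%nat ->
  rsum (fun m => c m * f m) (S a) (S B)
  = e B * f B - e a * f (S a) - rsum (fun m => e m * (f (S m) - f m)) (S a) B.
Proof.
  induction 1 as [|B HB IH].
  - rewrite rsum_S, !rsum_nil, <- e_step; ring.
  - rewrite rsum_S, IH, (rsum_S _ (S a) B), <- e_step; ring.
Qed.

Lemma abel_summation_bound K f a B : (forall m, Rabs (e m) <= K * sqrt (INR m)) ->
  (S a <= B)%nat -> Rabs (rsum (fun m => c m * f m) (S a) (S B)) <= K * abel_weight f a B.
Proof.
  intros He HB; rewrite abel_summation by exact HB; unfold abel_weight.
  assert (Hprod : forall m g, Rabs (e m * g) <= K * sqrt (INR m) * Rabs g)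
    by (intros; rewrite Rabs_mult; apply Rmult_le_compat_r; [apply Rabs_pos | apply He]).
  assert (Hvar : Rabs (rsum (fun m => e m * (f (S m) - f m)) (S a) B)
                 <= K * rsum (fun m => sqrt (INR m) * Rabs (f (S m) - f m)) (S a) B).
  { eapply Rle_trans; [apply rsum_abs, HB|].
    rewrite <- rsum_scal; apply rsum_le; [exact HB|].
    intros m _; rewrite <- Rmult_assoc; apply Hprod. }
  pose proof (Hprod B (f B)); pose proof (Hprod a (f (S a))).
  set (V := rsum (fun m => e m * (f (S m) - f m)) (S a) B) in *; clearbody V.
  pose proof (Rabs_triang (e B * f B) (- (e a * f (S a)))).
  pose proof (Rabs_triang (e B * f B - e a * f (S a)) (- V)).
  rewrite !Rabs_Ropp in *; unfold Rminus in *; lra.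
Qed.

End AbelSummation.

Lemma lattice_abel_bound f a B : (S a <= B)%nat ->
  Rabs (rsum (fun m => INR (r2 m) * f m) (S a) (S B) - PI * rsum f (S a) (S B))
  <= 8 * abel_weight f a B.
Proof.
  intros HB.
  rewrite <- rsum_scal, <- rsum_minus.
  rewrite (rsum_ext _ _ (fun m => (INR (r2 m) - PI) * f m)) by (try lia; intros; ring).
  apply (abel_summation_bound _ lattice_error); [|apply gauss_circle_bound | exact HB].
  intros m; unfold lattice_error; cbn [nsum]; rewrite plus_INR, S_INR; ring.
Qed.

Lemma abel_weight_minus F G a B : (S a <= B)%nat ->
  abel_weight (fun m => F m - G m) a B <= abel_weight F a B + abel_weight G a B.
Proof.
  intros HB; unfold abel_weight.
  assert (Htri : forall s x y, 0 <= s -> s * Rabs (x - y) <= s * Rabs x + s * Rabs y).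
  { intros s x y Hs; rewrite <- Rmult_plus_distr_l; apply Rmult_le_compat_l; auto.
    unfold Rminus; rewrite <- (Rabs_Ropp y); apply Rabs_triang. }
  pose proof (Htri _ (F B) (G B) (sqrt_pos (INR B))).
  pose proof (Htri _ (F (S a)) (G (S a)) (sqrt_pos (INR a))).
  assert (rsum (fun m => sqrt (INR m) * Rabs (F (S m) - G (S m) - (F m - G m))) (S a) B
          <= rsum (fun m => sqrt (INR m) * Rabs (F (S m) - F m)) (S a) B
           + rsum (fun m => sqrt (INR m) * Rabs (G (S m) - G m)) (S a) B).
  { rewrite <- rsum_plus; apply rsum_le; [exact HB|]; intros m _.
    replace (F (S m) - G (S m) - (F m - G m)) with ((F (S m) - F m) - (G (S m) - G m)) by ring.
    apply Htri, sqrt_pos. }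
  lra.
Qed.

(** * The two ranges of summation *)

Definition pole_term (t : R) (m : nat) : R := 1 / (INR m - t).

Definition conv_term (m : nat) : R := INR m / (INR m ^ 2 + 1).

Lemma sum_pole_below t L : INR L < t ->
  Rabs (rsum (pole_term t) 1 (S L) - (ln (t - INR L) - ln t)) <= 1 / (t - INR L).
Proof.
  intros HLt.
  assert (H1t : 0 < 1 / t) by (apply Rdiv_lt_0_compat; pose proof (pos_INR L); lra).
  pose proof (rsum_telescope_approx (pole_term t) (fun m => ln (t - INR m + 1))
    (fun m => - (1 / (t - INR m + 1))) 1 (S L)) as Happrox.
  cbv beta in Happrox; rewrite S_INR in Happrox; change (INR 1) with 1 in Happrox.
  replace (t - (INR L + 1) + 1) with (t - INR L) in Happrox by ring.
  replace (t - 1 + 1) with t in Happrox by ring.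
  enough (Rabs (rsum (pole_term t) 1 (S L) - (ln (t - INR L) - ln t))
          <= - (1 / t) - - (1 / (t - INR L))) by lra.
  apply Happrox; [lia|]; intros m Hm.
  assert (INR m <= INR L) by (apply le_INR; lia).
  cbv beta; unfold pole_term; rewrite ?S_INR.
  replace (t - (INR m + 1) + 1) with (t - INR m) by ring.
  replace (1 / (INR m - t)) with (- (1 / (t - INR m))) by (field; lra).
  pose proof (ln_succ_bounds (t - INR m) ltac:(lra)).
  apply Rabs_le; lra.
Qed.

Lemma sum_pole_above t H N : t < INR H -> (H <= S N)%nat ->
  Rabs (rsum (pole_term t) H (S N) - (ln (INR N + 1 - t) - ln (INR H - t))) <= 1 / (INR H - t).
Proof.
  intros HtH HHN.
  assert (INR H <= INR N + 1) by (rewrite <- S_INR; apply le_INR, HHN).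
  assert (0 < 1 / (INR N + 1 - t)) by (apply Rdiv_lt_0_compat; lra).
  pose proof (rsum_telescope_approx (pole_term t) (fun m => ln (INR m - t))
    (fun m => 1 / (INR m - t)) H (S N) HHN) as Happrox.
  cbv beta in Happrox; rewrite S_INR in Happrox.
  enough (Rabs (rsum (pole_term t) H (S N) - (ln (INR N + 1 - t) - ln (INR H - t)))
          <= 1 / (INR H - t) - 1 / (INR N + 1 - t)) by lra.
  apply Happrox; intros m Hm.
  assert (INR H <= INR m) by (apply le_INR; lia).
  cbv beta; unfold pole_term; rewrite ?S_INR; replace (INR m + 1 - t) with (INR m - t + 1) by ring.
  pose proof (ln_succ_bounds (INR m - t) ltac:(lra)).
  apply Rabs_le; lra.
Qed.

Lemma conv_term_log_step y : 1 <= y ->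
  Rabs (y / (y ^ 2 + 1) - (ln (y + 1) - ln y)) <= 1 / y - 1 / (y + 1).
Proof.
  intros Hy; pose proof (ln_succ_bounds y ltac:(lra)).
  assert (Hsplit : y / (y ^ 2 + 1) = 1 / y - 1 / (y * (y ^ 2 + 1))) by (field; nra).
  assert (0 <= 1 / (y * (y ^ 2 + 1))) by (apply Rlt_le, Rdiv_lt_0_compat; nra).
  assert (1 / (y * (y ^ 2 + 1)) <= 1 / y - 1 / (y + 1)).
  { replace (1 / y - 1 / (y + 1)) with (1 / (y * (y + 1))) by (field; lra).
    unfold Rdiv; rewrite !Rmult_1_l; apply Rinv_le_contravar; nra. }
  rewrite Hsplit; apply Rabs_le; lra.
Qed.

Lemma sum_conv A B : (1 <= A)%nat -> (A <= S B)%nat ->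
  Rabs (rsum conv_term A (S B) - (ln (INR B + 1) - ln (INR A))) <= 1.
Proof.
  intros HA HAB.
  assert (1 <= INR A) by (apply (le_INR 1); exact HA).
  assert (0 < 1 / (INR B + 1)) by (apply Rdiv_lt_0_compat; pose proof (pos_INR B); lra).
  assert (1 / INR A <= 1) by (apply (Rdiv_le_1 1 (INR A)); lra).
  pose proof (rsum_telescope_approx conv_term (fun m => ln (INR m)) (fun m => 1 / INR m)
    A (S B) HAB) as Happrox.
  cbv beta in Happrox; rewrite S_INR in Happrox.
  enough (Rabs (rsum conv_term A (S B) - (ln (INR B + 1) - ln (INR A)))
          <= 1 / INR A - 1 / (INR B + 1)) by lra.
  apply Happrox; intros m Hm; cbv beta; unfold conv_term; rewrite ?S_INR.
  apply conv_term_log_step, (le_INR 1); lia.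
Qed.

Lemma sqrt_conv_le_1 y : 1 <= y -> sqrt y * Rabs (y / (y ^ 2 + 1)) <= 1.
Proof.
  intros Hy; set (a := sqrt y).
  assert (Haa : a * a = y) by (apply sqrt_sqrt; lra).
  assert (1 <= a) by (unfold a; rewrite <- sqrt_1; apply sqrt_le_1_alt; lra).
  rewrite Rabs_pos_eq by (apply Rlt_le, Rdiv_lt_0_compat; nra).
  rewrite <- Haa; replace 1 with ((a * a * a) / (a * a * a)) at 2 by (field; lra).
  unfold Rdiv at 1; rewrite <- Rmult_assoc.
  apply Rdiv_le_div_cross; simpl; nra.
Qed.

Lemma sqrt_conv_diff_le y : 1 <= y ->
  sqrt y * Rabs ((y + 1) / ((y + 1) ^ 2 + 1) - y / (y ^ 2 + 1))
  <= 2 * (1 / sqrt y - 1 / sqrt (y + 1)).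
Proof.
  intros Hy; set (a := sqrt y); set (b := sqrt (y + 1)).
  assert (Haa : a * a = y) by (apply sqrt_sqrt; lra).
  assert (Hbb : b * b = y + 1) by (apply sqrt_sqrt; lra).
  assert (1 <= a) by (unfold a; rewrite <- sqrt_1; apply sqrt_le_1_alt; lra).
  assert (a <= b) by (apply sqrt_le_1_alt; lra).
  assert (Hdiff : Rabs ((y + 1) / ((y + 1) ^ 2 + 1) - y / (y ^ 2 + 1)) <= 1 / (y * (y + 1))).
  { replace ((y + 1) / ((y + 1) ^ 2 + 1) - y / (y ^ 2 + 1)) with
      (- ((y * y + y - 1) / ((y ^ 2 + 1) * ((y + 1) ^ 2 + 1)))) by (field; simpl; nra).
    rewrite Rabs_Ropp, Rabs_pos_eq by (apply Rlt_le, Rdiv_lt_0_compat; simpl; nra).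
    apply Rdiv_le_div_cross; simpl; nra. }
  apply Rle_trans with (a * (1 / (y * (y + 1)))); [apply Rmult_le_compat_l; lra|].
  replace (2 * (1 / a - 1 / b)) with (2 * (b - a) / (a * b)) by (field; lra).
  replace (y * (y + 1)) with ((a * a) * (b * b)) by (rewrite Haa, Hbb; ring).
  replace (a * (1 / (a * a * (b * b)))) with (1 / (a * b * b)) by (field; lra).
  apply Rdiv_le_div_cross; try nra.
  (* [b - a = 1 / (a + b) >= 1 / (2 b)] *)
  assert ((b - a) * (b + a) = 1) by nra.
  assert (2 * (b - a) * b >= 1) by nra.
  assert (0 < a * b) by nra.
  nra.
Qed.

Lemma sqrt_pole_diff_le t y : 0 < t -> t < y ->
  sqrt y * Rabs (1 / (y + 1 - t) - 1 / (y - t))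
  <= 2 * (sqrt y / (y - t) - sqrt (y + 1) / (y + 1 - t)).
Proof.
  intros Ht Hy; set (a := sqrt y); set (b := sqrt (y + 1)).
  assert (Haa : a * a = y) by (apply sqrt_sqrt; lra).
  assert (Hbb : b * b = y + 1) by (apply sqrt_sqrt; lra).
  assert (0 < a) by (apply sqrt_lt_R0; lra).
  assert (a <= b) by (apply sqrt_le_1_alt; lra).
  replace (1 / (y + 1 - t) - 1 / (y - t)) with (- (1 / ((y - t) * (y - t + 1)))) by (field; lra).
  rewrite Rabs_Ropp, Rabs_pos_eq by (apply Rlt_le, Rdiv_lt_0_compat; nra).
  replace (a * (1 / ((y - t) * (y - t + 1)))) with (a / ((y - t) * (y - t + 1))) by (field; lra).
  replace (2 * (a / (y - t) - b / (y + 1 - t)))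
    with (2 * (a * (y - t + 1) - b * (y - t)) / ((y - t) * (y - t + 1))) by (field; lra).
  unfold Rdiv; apply Rmult_le_compat_r; [apply Rlt_le, Rinv_0_lt_compat; nra|].
  (* [b - a = 1 / (a + b) <= 1 / (2 a)] and [y - t <= a * a] *)
  assert ((b - a) * (b + a) = 1) by nra.
  assert (2 * (y - t) * (b - a) <= a) by nra.
  nra.
Qed.

Lemma abel_weight_conv a B : (S a <= B)%nat -> abel_weight conv_term a B <= 4.
Proof.
  intros HB; unfold abel_weight.
  assert (HB1 : 1 <= INR B) by (apply (le_INR 1); lia).
  assert (Ha1 : 1 <= INR (S a)) by (apply (le_INR 1); lia).
  pose proof (sqrt_conv_le_1 _ HB1).
  assert (sqrt (INR a) * Rabs (conv_term (S a)) <= 1).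
  { apply Rle_trans with (sqrt (INR (S a)) * Rabs (conv_term (S a))).
    - apply Rmult_le_compat_r; [apply Rabs_pos | apply sqrt_le_1_alt, le_INR; lia].
    - apply sqrt_conv_le_1, Ha1. }
  assert (Hvar : rsum (fun m => sqrt (INR m) * Rabs (conv_term (S m) - conv_term m)) (S a) B
                 <= 2 * (1 / sqrt (INR (S a)) - 1 / sqrt (INR B))).
  { rewrite <- (rsum_telescope_neg (fun m => 1 / sqrt (INR m))), <- rsum_scal.
    apply rsum_le; [exact HB|]; intros m Hm.
    unfold conv_term; rewrite S_INR; apply sqrt_conv_diff_le, (le_INR 1); lia. }
  assert (1 / sqrt (INR (S a)) <= 1).
  { apply (Rdiv_le_1 1); [apply sqrt_lt_R0; lra|].
    rewrite <- sqrt_1; apply sqrt_le_1_alt; lra. }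
  assert (0 <= 1 / sqrt (INR B)) by (apply Rlt_le, Rdiv_lt_0_compat, sqrt_lt_R0; lra).
  unfold conv_term in *; lra.
Qed.

Lemma abel_weight_pole_below t L : (1 <= L)%nat -> INR L < t ->
  abel_weight (pole_term t) 0 L <= 2 * (sqrt (INR L) / (t - INR L)).
Proof.
  intros HL HLt; unfold abel_weight.
  assert (HL1 : 1 <= INR L) by (apply (le_INR 1); exact HL).
  assert (Hend : sqrt (INR L) * Rabs (pole_term t L) = sqrt (INR L) / (t - INR L)).
  { unfold pole_term; replace (1 / (INR L - t)) with (- (1 / (t - INR L))) by (field; lra).
    rewrite Rabs_Ropp, Rabs_pos_eq by (apply Rlt_le, Rdiv_lt_0_compat; lra); field; lra. }
  assert (Hstart : sqrt (INR 0) * Rabs (pole_term t 1) = 0) by (simpl INR; rewrite sqrt_0; ring).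
  set (G := fun m : nat => 1 / (t - INR m)).
  (* Below the pole [pole_term t] decreases, so its variation telescopes. *)
  assert (Hvar : rsum (fun m => sqrt (INR m) * Rabs (pole_term t (S m) - pole_term t m)) 1 L
                 <= sqrt (INR L) * (G L - G 1%nat)).
  { rewrite <- (rsum_telescope G), <- rsum_scal; apply rsum_le; [exact HL|].
    intros m Hm; assert (INR (S m) <= INR L) by (apply le_INR; lia).
    assert (1 <= INR m) by (apply (le_INR 1); lia).
    unfold pole_term, G; rewrite S_INR in *.
    replace (1 / (INR m + 1 - t) - 1 / (INR m - t))
      with (- (1 / (t - (INR m + 1)) - 1 / (t - INR m))) by (field; lra).
    assert (0 <= 1 / (t - (INR m + 1)) - 1 / (t - INR m))
      by (apply Rge_le, Rge_minus, Rle_ge, Rdiv_le_div_cross; lra).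
    rewrite Rabs_Ropp, Rabs_pos_eq by lra.
    apply Rmult_le_compat_r; [lra | apply sqrt_le_1_alt; lra]. }
  unfold G in Hvar; change (INR 1) with 1 in Hvar.
  assert (0 < 1 / (t - 1)) by (apply Rdiv_lt_0_compat; lra).
  assert (0 <= sqrt (INR L)) by apply sqrt_pos.
  assert (sqrt (INR L) * (1 / (t - INR L) - 1 / (t - 1)) <= sqrt (INR L) / (t - INR L))
    by (unfold Rdiv; nra).
  rewrite Hend, Hstart; lra.
Qed.

Lemma abel_weight_pole_above t H N : (1 <= H)%nat -> 0 < t -> t < INR H -> (H <= N)%nat ->
  abel_weight (pole_term t) (pred H) N <= 3 * (sqrt (INR H) / (INR H - t)).
Proof.
  intros HH Ht HtH HHN; unfold abel_weight; replace (S (pred H)) with H by lia.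
  assert (INR H <= INR N) by (apply le_INR; exact HHN).
  set (phi := fun m : nat => sqrt (INR m) / (INR m - t)).
  assert (Hend : sqrt (INR N) * Rabs (pole_term t N) = phi N).
  { unfold pole_term, phi; rewrite Rabs_pos_eq by (apply Rlt_le, Rdiv_lt_0_compat; lra).
    field; lra. }
  assert (0 <= phi N) by (apply Rdiv_le_0_compat; [apply sqrt_pos | lra]).
  assert (Hstart : sqrt (INR (pred H)) * Rabs (pole_term t H) <= phi H).
  { unfold pole_term, phi; rewrite Rabs_pos_eq by (apply Rlt_le, Rdiv_lt_0_compat; lra).
    replace (sqrt (INR H) / (INR H - t)) with (sqrt (INR H) * (1 / (INR H - t))) by (field; lra).
    apply Rmult_le_compat_r; [apply Rlt_le, Rdiv_lt_0_compat; lra|].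
    apply sqrt_le_1_alt, le_INR; lia. }
  assert (Hvar : rsum (fun m => sqrt (INR m) * Rabs (pole_term t (S m) - pole_term t m)) H N
                 <= 2 * (phi H - phi N)).
  { rewrite <- (rsum_telescope_neg phi), <- rsum_scal; apply rsum_le; [exact HHN|].
    intros m Hm; assert (INR H <= INR m) by (apply le_INR; lia).
    unfold pole_term, phi; rewrite S_INR; apply sqrt_pole_diff_le; lra. }
  rewrite Hend; unfold phi in *; lra.
Qed.

Definition summand (t : R) (m : nat) : R := pole_term t m - conv_term m.

Lemma Rabs_sub_pi_mult a x y : Rabs (a - PI * y) <= Rabs (a - PI * x) + 4 * Rabs (x - y).
Proof.
  pose proof PI_RGT_0; pose proof PI_4; pose proof (Rabs_pos (x - y)).
  pose proof (Rabs_triang (a - PI * x) (PI * (x - y))) as Htri.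
  replace (a - PI * x + PI * (x - y)) with (a - PI * y) in Htri by ring.
  rewrite Rabs_mult, (Rabs_pos_eq PI) in Htri by lra; nra.
Qed.

Lemma weighted_sum_below t L : (1 <= L)%nat -> 1 <= t - INR L ->
  sqrt (INR L) <= 2 * (t - INR L) ->
  Rabs (rsum (fun m => INR (r2 m) * summand t m) 1 (S L)
        - PI * (ln (t - INR L) - ln t - ln (INR L + 1))) <= 72.
Proof.
  intros HL Ht HsL.
  pose proof (lattice_abel_bound (summand t) 0 L HL) as Habel.
  pose proof (abel_weight_minus (pole_term t) conv_term 0 L HL
    : abel_weight (summand t) 0 L <= _).
  pose proof (abel_weight_pole_below t L HL ltac:(lra)).
  pose proof (abel_weight_conv 0 L HL).
  pose proof (Rdiv_le_of_le_mult (sqrt (INR L)) (t - INR L) 2 ltac:(lra) ltac:(lra)).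
  pose proof (Rdiv_le_of_le_mult 1 (t - INR L) 1 ltac:(lra) ltac:(lra)).
  pose proof (sum_pole_below t L ltac:(lra)) as Hpole.
  pose proof (sum_conv 1 L (le_n 1) ltac:(lia)) as Hconv.
  change (INR 1) with 1 in Hconv; rewrite ln_1 in Hconv.
  assert (Hsum : Rabs (rsum (summand t) 1 (S L) - (ln (t - INR L) - ln t - ln (INR L + 1))) <= 2).
  { unfold summand; rewrite (rsum_minus (pole_term t) conv_term).
    apply Rabs_le_between in Hpole, Hconv; apply Rabs_le; lra. }
  eapply Rle_trans; [apply (Rabs_sub_pi_mult _ (rsum (summand t) 1 (S L)))|].
  lra.
Qed.

Lemma weighted_sum_above t H N : (1 <= H)%nat -> 0 < t -> 1 <= INR H - t ->
  sqrt (INR H) <= 3 * (INR H - t) -> (H <= N)%nat ->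
  Rabs (rsum (fun m => INR (r2 m) * summand t m) H (S N)
        - PI * (ln (INR N + 1 - t) - ln (INR H - t) - ln (INR N + 1) + ln (INR H))) <= 112.
Proof.
  intros HH Ht HHt HsH HHN.
  pose proof (lattice_abel_bound (summand t) (pred H) N ltac:(lia)) as Habel.
  pose proof (abel_weight_minus (pole_term t) conv_term (pred H) N ltac:(lia)
    : abel_weight (summand t) (pred H) N <= _).
  pose proof (abel_weight_pole_above t H N HH Ht ltac:(lra) HHN).
  pose proof (abel_weight_conv (pred H) N ltac:(lia)).
  replace (S (pred H)) with H in * by lia.
  pose proof (Rdiv_le_of_le_mult (sqrt (INR H)) (INR H - t) 3 ltac:(lra) ltac:(lra)).
  pose proof (Rdiv_le_of_le_mult 1 (INR H - t) 1 ltac:(lra) ltac:(lra)).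
  pose proof (sum_pole_above t H N ltac:(lra) ltac:(lia)) as Hpole.
  pose proof (sum_conv H N HH ltac:(lia)) as Hconv.
  assert (Hsum : Rabs (rsum (summand t) H (S N)
      - (ln (INR N + 1 - t) - ln (INR H - t) - ln (INR N + 1) + ln (INR H))) <= 2).
  { unfold summand; rewrite (rsum_minus (pole_term t) conv_term).
    apply Rabs_le_between in Hpole, Hconv; apply Rabs_le; lra. }
  eapply Rle_trans; [apply (Rabs_sub_pi_mult _ (rsum (summand t) H (S N)))|].
  lra.
Qed.

Lemma term_inside u v t m : Rabs (INR m - u) <= sqrt v -> term u v t m = 0.
Proof.
  intros Hm; unfold term; destruct (Nat.ltb 0 m); [|reflexivity].
  destruct (Rlt_dec (sqrt v) (Rabs (INR m - u))); [lra | reflexivity].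
Qed.

Lemma term_outside u v t m : (1 <= m)%nat -> sqrt v < Rabs (INR m - u) ->
  term u v t m = INR (r2 m) * summand t m.
Proof.
  intros Hm1 Hm; unfold term; replace (Nat.ltb 0 m) with true by (symmetry; apply Nat.ltb_lt; lia).
  destruct (Rlt_dec (sqrt v) (Rabs (INR m - u))); [reflexivity | lra].
Qed.

Lemma partial_sum_split u v t L H N :
  INR L < u - sqrt v <= INR L + 1 -> INR H - 1 <= u + sqrt v < INR H -> (H <= S N)%nat ->
  rsum (term u v t) 0 (S N)
  = rsum (fun m => INR (r2 m) * summand t m) 1 (S L)
    + rsum (fun m => INR (r2 m) * summand t m) H (S N).
Proof.
  intros HL HH HN; pose proof (sqrt_pos v).
  assert (HLH : (L < H)%nat) by (apply INR_lt; lra).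
  rewrite (rsum_split _ 0 1), (rsum_split _ 1 (S L)), (rsum_split _ (S L) H).
  rewrite (rsum_zero _ 0 1), (rsum_zero _ (S L) H), !Rplus_0_l; try lia.
  - f_equal; apply rsum_ext; try lia; intros m Hm; apply term_outside; try lia.
    + assert (INR m <= INR L) by (apply le_INR; lia).
      rewrite Rabs_left; lra.
    + assert (INR H <= INR m) by (apply le_INR; lia).
      rewrite Rabs_right; lra.
  - intros m Hm; apply term_inside, Rabs_le.
    assert (INR L + 1 <= INR m) by (rewrite <- S_INR; apply le_INR; lia).
    assert (INR m + 1 <= INR H) by (rewrite <- S_INR; apply le_INR; lia).
    lra.
  - intros m Hm; replace m with 0%nat by lia; reflexivity.
Qed.

Lemma window_facts w u t L H :
  100 <= w -> Rabs (u - t) <= w / 4 -> 4 * w <= u -> u <= 2 * (w * w) ->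
  INR L < u - w <= INR L + 1 -> INR H - 1 <= u + w < INR H ->
  (1 <= L)%nat /\ 1 <= t - INR L /\ sqrt (INR L) <= 2 * (t - INR L) /\
  1 <= INR H - t /\ sqrt (INR H) <= 3 * (INR H - t) /\
  Rabs (ln (t - INR L) - ln (INR H - t)) <= 3 /\ Rabs (ln (INR H) - ln (INR L + 1)) <= 3.
Proof.
  intros Hw Hut Huw Huv HL HH; apply Rabs_le_between in Hut.
  assert (HL1 : (1 <= L)%nat) by (destruct L; [simpl in HL; lra | lia]).
  assert (sqrt (INR L) <= 3 / 2 * w)
    by (rewrite <- (sqrt_square (3 / 2 * w)) by lra; apply sqrt_le_1_alt; nra).
  assert (sqrt (INR H) <= 7 / 4 * w)
    by (rewrite <- (sqrt_square (7 / 4 * w)) by lra; apply sqrt_le_1_alt; nra).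
  split; [exact HL1|]; repeat split; try lra; apply ln_ratio_le_3; lra.
Qed.

Lemma partial_sum_estimate u v t L H N :
  100 <= sqrt v -> Rabs (u - t) <= sqrt v / 4 -> 4 * sqrt v <= u -> u <= 2 * v ->
  INR L < u - sqrt v <= INR L + 1 -> INR H - 1 <= u + sqrt v < INR H ->
  (H <= N)%nat -> 2 * t <= INR N + 1 ->
  Rabs (rsum (term u v t) 0 (S N) + PI * ln t) <= 220.
Proof.
  intros Hw Hut Huw Huv HL HH HHN HtN.
  assert (Hv : v = sqrt v * sqrt v) by (symmetry; apply sqrt_sqrt; nra).
  destruct (window_facts (sqrt v) u t L H) as (HL1 & HtL & HsL & HHt & HsH & Hln1 & Hln2);
    try (rewrite <- Hv); auto.
  assert (Ht : 0 < t) by (apply Rabs_le_between in Hut; lra).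
  assert (INR H <= INR N) by (apply le_INR, HHN).
  assert (HLH : (L < H)%nat) by (apply INR_lt; lra).
  pose proof (ln_ratio_le_3 (INR N + 1 - t) (INR N + 1)
    ltac:(lra) ltac:(lra) ltac:(lra) ltac:(lra)) as Hln3.
  pose proof (weighted_sum_below t L HL1 HtL HsL) as Hbelow.
  pose proof (weighted_sum_above t H N ltac:(lia) Ht HHt HsH HHN) as Habove.
  rewrite (partial_sum_split u v t L H N) by (auto; lia).
  apply Rabs_le_between in Hbelow, Habove, Hln1, Hln2, Hln3.
  pose proof PI_RGT_0; pose proof PI_4.
  apply Rabs_le; split; nra.
Qed.

Lemma is_series_bounded_eventually_nonneg a c C N0 :
  (forall n, (N0 <= n)%nat -> 0 <= a n) ->
  (forall n, (N0 <= n)%nat -> Rabs (rsum a 0 (S n) + c) <= C) ->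
  exists S, is_series a S /\ Rabs (S + c) <= C.
Proof.
  intros Hpos Hbnd.
  set (Q := fun k => rsum a 0 (S (k + N0))).
  assert (HQ : forall k, - C - c <= Q k <= C - c)
    by (intros k; pose proof (Hbnd (k + N0)%nat ltac:(lia)) as Hk;
        apply Rabs_le_between in Hk; unfold Q; lra).
  assert (Hincr : forall k, Q k <= Q (S k)).
  { intros k; unfold Q; simpl (S k + N0)%nat; rewrite (rsum_S a 0 (S (k + N0))).
    pose proof (Hpos (S (k + N0)) ltac:(lia)); lra. }
  destruct (ex_finite_lim_seq_incr Q (C - c) Hincr) as [l Hl]; [apply HQ|].
  exists l; split.
  - enough (Hsum : is_lim_seq (sum_n a) l) by exact Hsum.
    apply (is_lim_seq_ext (fun n => rsum a 0 (S n))); [intros; symmetry; apply sum_n_rsum|].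
    apply (is_lim_seq_incr_n _ N0); exact Hl.
  - assert (Hup : Rbar_le l (C - c))
      by (apply (is_lim_seq_le Q (fun _ => C - c)); [apply HQ | exact Hl | apply is_lim_seq_const]).
    assert (Hlo : Rbar_le (- C - c) l)
      by (apply (is_lim_seq_le (fun _ => - C - c) Q);
          [apply HQ | apply is_lim_seq_const | exact Hl]).
    simpl in Hup, Hlo; apply Rabs_le; lra.
Qed.

Lemma term_nonneg u v t m : 0 < t -> t < INR m -> 0 <= term u v t m.
Proof.
  intros Ht Hm; unfold term; destruct (Nat.ltb 0 m); [|lra].
  destruct (Rlt_dec (sqrt v) (Rabs (INR m - u))); [|lra].
  apply Rmult_le_pos; [apply pos_INR|].
  assert (INR m / (INR m ^ 2 + 1) <= 1 / (INR m - t)) by (apply Rdiv_le_div_cross; simpl; nra).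
  lra.
Qed.

Lemma series_estimate u v t :
  100 <= sqrt v -> Rabs (u - t) <= sqrt v / 4 -> 4 * sqrt v <= u -> u <= 2 * v ->
  exists S, is_series (term u v t) S /\ Rabs (S + PI * ln t) <= 220.
Proof.
  intros Hw Hut Huw Huv; apply Rabs_le_between in Hut.
  destruct (nfloor1_ex (u - sqrt v) ltac:(lra)) as [L HL].
  destruct (nfloor_ex (u + sqrt v) ltac:(lra)) as [H' HH']; set (H := S H').
  assert (HH : INR H - 1 <= u + sqrt v < INR H) by (unfold H; rewrite S_INR; lra).
  destruct (nfloor_ex (2 * t) ltac:(lra)) as [M HM].
  apply (is_series_bounded_eventually_nonneg _ _ _ (Nat.max H M)).
  - intros n Hn; apply term_nonneg; [lra|].
    assert (INR H <= INR n) by (apply le_INR; lia); lra.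
  - intros n Hn; apply (partial_sum_estimate u v t L H n); auto; [apply Rabs_le; lra | lia|].
    assert (INR M <= INR n) by (apply le_INR; lia); lra.
Qed.

Theorem lemma3p3 :
  exists C V0 : R, forall u v t : R,
    V0 <= u -> V0 <= v ->
    Rpower v (9 / 10) <= u -> u <= 2 * v ->
    1 < t ->
    ~ (exists m : nat, t = INR m /\ (0 < r2 m)%nat) ->
    Rabs (u - t) <= Rpower v (1 / 3) ->
    exists S : R, is_series (term u v t) S /\ Rabs (S + PI * ln t) <= C.
Proof.
  (* [t] needs no restriction: [m = t] lies in the excluded window [|m - u| <= sqrt v]. *)
  exists 220, (exp 200); intros u v t _ Hv Hu910 Hu2 _ _ Hut.
  assert (Hv0 : 0 < v) by (pose proof (exp_pos 200); lra).
  assert (Hlnv : 200 <= ln v) by (rewrite <- (ln_exp 200); apply ln_le; [apply exp_pos | exact Hv]).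
  pose proof (Rpower_gap 100 v 0 (/ 2) Hv0 ltac:(lra)) as Hw.
  pose proof (Rpower_gap 4 v (1 / 3) (/ 2) Hv0 ltac:(lra)) as Hsmall.
  pose proof (Rpower_gap 4 v (/ 2) (9 / 10) Hv0 ltac:(lra)) as Hbig.
  rewrite Rpower_O, Rpower_sqrt in * by exact Hv0.
  apply series_estimate; lra.
Qed.
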